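(* For $n\ge1$ let $M_n$ be the number of domino tilings of $K_4\times P_n$. Then $M_n=4M_{n-1}+4M_{n-2}-M_{n-3}$ for $n\ge4$, and for all $n\ge1$, $$M_n=\frac17\Big[\Big(\tfrac{5+\sqrt{21}}2\Big)^{n+1}+\Big(\tfrac{5-\sqrt{21}}2\Big)^{n+1}+2(-1)^n\Big].$$
   Context: $H\times K$ denotes the Cartesian product of graphs. $P_n$ is the path on $n$ vertices and $K_4$ is the complete graph on $4$ vertices. A domino tiling of a finite graph is a perfect matching, and the number of domino tilings is the number of perfect matchings. *)

From HB Require Import structures.
From mathcomp Require Import all_boot all_order all_algebra.
Set Implicit Arguments. Unset Strict Implicit. Unset Printing Implicit Defensive.
Import Order.TTheory GRing.Theory Num.Theory.

Definition vtx (n : nat) : finType := ('I_4 * 'I_n)%type.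

Definition adjK4 : rel 'I_4 := fun a a' => a != a'.

Definition adjP (n : nat) : rel 'I_n :=
  fun b b' => (b.+1 == b' :> nat) || (b'.+1 == b :> nat).

Definition adjKP (n : nat) : rel (vtx n) :=
  fun u v => (adjK4 u.1 v.1 && (u.2 == v.2)) || ((u.1 == v.1) && adjP u.2 v.2).

Definition is_edge (n : nat) (e : {set vtx n}) : bool :=
  [exists u : vtx n, exists v : vtx n, adjKP u v && (e == [set u; v])].

Definition perfect_matching (n : nat) (M : {set {set vtx n}}) : bool :=
  [forall e in M, is_edge e] &&
  [forall v : vtx n, #|[set e in M | v \in e]| == 1%N].

Definition domino_count (n : nat) : nat :=
  #|[set M : {set {set vtx n}} | perfect_matching M]|.

From HB Require Import structures.
From mathcomp Require Import all_boot all_order all_algebra.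
From mathcomp Require Import ring zify.
Import Order.TTheory GRing.Theory Num.Theory.
Set Implicit Arguments. Unset Strict Implicit. Unset Printing Implicit Defensive.

(* A perfect matching of a graph is the same thing as an involution p with
   every v adjacent to p v. For K_4 x P_n such an involution is recorded layer
   by layer: each copy of K_4 becomes a letter giving, for each of its four
   vertices, its partner inside the layer or the information "matched upwards"
   or "matched downwards". In a valid word the up set of each letter is the
   down set of the next one, so the tilings are counted by iterating a transfer
   operator T on functions of the down set (16 states). The identity
   T^3 + 1 = 4 T^2 + 4 T, checked by computation on the initial vector and
   propagated by linearity, gives the recurrence; the closed form satisfies it
   because its three terms are powers of the roots of (x + 1)(x^2 - 5x + 1). *)

(** * Perfect matchings as involutions *)

Section MatchingInvolution.
Variables (T : finType) (e : rel T).
Hypotheses (e_irr : irreflexive e) (e_sym : symmetric e).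

Definition edgeb (E : {set T}) := [exists u, exists v, e u v && (E == [set u; v])].

Definition perfect_matchingb (M : {set {set T}}) :=
  [forall E in M, edgeb E] && [forall v, #|[set E in M | v \in E]| == 1%N].

Definition matching_involution (p : {ffun T -> T}) :=
  [forall v, e v (p v) && (p (p v) == v)].

Lemma matching_involutionP (p : {ffun T -> T}) :
  reflect (forall v, e v (p v) /\ p (p v) = v) (matching_involution p).
Proof.
apply: (iffP forallP) => H v; first by case/andP: (H v) => -> /eqP.
by case: (H v) => -> ->; rewrite eqxx.
Qed.

Definition matching_of (p : {ffun T -> T}) := [set [set v; p v] | v : T].

Lemma perfect_matching_of (p : {ffun T -> T}) :
  matching_involution p -> perfect_matchingb (matching_of p).
Proof.
move/matching_involutionP => p_inv; apply/andP; split.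
  apply/forall_inP => _ /imsetP [v _ ->]; apply/existsP; exists v.
  by apply/existsP; exists (p v); rewrite (p_inv v).1 eqxx.
apply/forallP => w; apply/cards1P; exists [set w; p w].
apply/setP => E; rewrite !inE; apply/andP/eqP => [[/imsetP [v _ ->]]|->].
  by case/set2P => ->; rewrite ?(p_inv v).2 1?setUC.
by split; [apply/imsetP; exists w | exact: set21].
Qed.

Lemma matching_of_inj (p q : {ffun T -> T}) :
  matching_involution p -> matching_involution q ->
  matching_of p = matching_of q -> p = q.
Proof.
move=> /matching_involutionP p_inv /matching_involutionP q_inv Epq.
apply/ffunP => v.
have : [set v; p v] \in matching_of q by rewrite -Epq; apply/imsetP; exists v.
case/imsetP => u _ Eu.
have Evq : [set v; p v] = [set v; q v].
  have : v \in [set u; q u] by rewrite -Eu set21.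
  by case/set2P => Ev; rewrite Eu Ev ?(q_inv u).2 1?setUC.
have : p v \in [set v; q v] by rewrite -Evq set22.
by case/set2P => // pvv; move: (p_inv v).1; rewrite pvv e_irr.
Qed.

Lemma perfect_matching_cover M : perfect_matchingb M -> forall v,
  exists u, [/\ e v u, [set v; u] \in M & forall E, E \in M -> v \in E -> E = [set v; u]].
Proof.
case/andP => /forall_inP M_edges /forallP M_cover v.
have [E0 ME0] := cards1P (M_cover v).
have : E0 \in [set E in M | v \in E] by rewrite ME0 set11.
rewrite inE => /andP [E0M vE0].
have E0_uniq E : E \in M -> v \in E -> E = E0.
  by move=> EM vE; apply/set1P; rewrite -ME0 inE EM vE.
case/existsP: (M_edges _ E0M) => x /existsP [y /andP [xy /eqP E0xy]].
move: vE0; rewrite E0xy; case/set2P => [vx|vy]; subst.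
  by exists y.
by exists x; rewrite e_sym setUC.
Qed.

Definition partner (M : {set {set T}}) : {ffun T -> T} :=
  [ffun v => odflt v [pick u | [set v; u] \in M]].

Lemma partnerE M v u : perfect_matchingb M -> [set v; u] \in M -> partner M v = u.
Proof.
move=> pmM vuM; have [w [vw vwM Mv]] := perfect_matching_cover pmM v.
have partner_uniq u' : [set v; u'] \in M -> u' = w.
  move=> vu'M; have Evu' := Mv _ vu'M (set21 _ _).
  have : u' \in [set v; w] by rewrite -Evu' set22.
  case/set2P => // u'v; have : w \in [set v; u'] by rewrite Evu' set22.
  by rewrite u'v setUid => /set1P wv; move: vw; rewrite wv e_irr.
rewrite ffunE; case: pickP => [x /partner_uniq -> /=|/(_ w)].
  by rewrite (partner_uniq _ vuM).
by rewrite vwM.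
Qed.

Lemma partner_involution M : perfect_matchingb M -> matching_involution (partner M).
Proof.
move=> pmM; apply/matching_involutionP => v.
have [u [vu vuM _]] := perfect_matching_cover pmM v.
rewrite (partnerE pmM vuM); split=> //; apply: partnerE => //; by rewrite setUC.
Qed.

Lemma matching_of_partner M : perfect_matchingb M -> matching_of (partner M) = M.
Proof.
move=> pmM; apply/setP => E; apply/imsetP/idP => [[v _ ->]|EM].
  have [u [_ vuM _]] := perfect_matching_cover pmM v.
  by rewrite (partnerE pmM vuM).
have : edgeb E by case/andP: pmM => /forall_inP ->.
case/existsP => x /existsP [y /andP [_ /eqP Exy]].
exists x => //; have [u [_ xuM Mx]] := perfect_matching_cover pmM x.
by rewrite (partnerE pmM xuM) (Mx E) // Exy set21.
Qed.

Lemma card_perfect_matchings :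
  #|[set M | perfect_matchingb M]| = #|[set p | matching_involution p]|.
Proof.
have -> : [set M | perfect_matchingb M] = matching_of @: [set p | matching_involution p].
  apply/setP => M; rewrite inE; apply/idP/imsetP => [pmM|[p]].
    by exists (partner M); rewrite ?inE ?partner_involution ?matching_of_partner.
  by rewrite inE => /perfect_matching_of pm_p ->.
by apply: card_in_imset => p q; rewrite !inE; exact: matching_of_inj.
Qed.

End MatchingInvolution.

Lemma adjKP_irr n : irreflexive (@adjKP n).
Proof. by move=> v; rewrite /adjKP /adjK4 /adjP eqxx /= !orbb; lia. Qed.

Lemma adjKP_sym n : symmetric (@adjKP n).
Proof.
move=> u v; rewrite /adjKP /adjK4 /adjP [u.1 == v.1]eq_sym [u.2 == v.2]eq_sym.
by rewrite [(_.+1 == _) || _]orbC.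
Qed.

Lemma domino_count_involutions n :
  domino_count n = #|[set p | matching_involution (@adjKP n) p]|.
Proof. exact: card_perfect_matchings (@adjKP_irr n) (@adjKP_sym n). Qed.

(** * Counting valid layer words with a transfer operator *)

Fixpoint words_over (A : Type) (alphabet : seq A) (k : nat) : seq (seq A) :=
  if k is k'.+1 then [seq x :: w | x <- alphabet, w <- words_over alphabet k']
  else [:: [::]].

Lemma mem_words_over (A : eqType) (alphabet : seq A) k w :
  (w \in words_over alphabet k) = (size w == k) && all (mem alphabet) w.
Proof.
elim: k w => [|k IHk] [|x w] //=; first by apply/allpairsP => -[[]] ? ? [].
apply/allpairsP/andP => [[[y w'] /= [yA w'W [-> ->]]]|[/= sw /andP [xA wA]]].
  by move: w'W; rewrite IHk => /andP [/eqP -> ->]; rewrite yA.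
by exists (x, w); split=> //; rewrite IHk -eqSS sw.
Qed.

Lemma uniq_words_over (A : eqType) (alphabet : seq A) k :
  uniq alphabet -> uniq (words_over alphabet k).
Proof.
move=> uA; elim: k => [|k IHk] //=.
by apply: allpairs_uniq => // -[x1 w1] [x2 w2] _ _ /= [-> ->].
Qed.

(* A letter describes one copy of K_4: its entry c at vertex a gives the
   partner of a, namely vertex c of the same layer when c < 4, and vertex a
   of the next (c = 4) or previous (c = 5) layer. A word lists the layers
   from the bottom up. *)
Definition letters := words_over (iota 0 6) 4.
Definition words := words_over letters.

Definition layer_ok (x : seq nat) :=
  all (fun a => let c := nth 0 x a in (c < 4) ==> (c != a) && (nth 0 x c == a))
      (iota 0 4).
Definition up_set (x : seq nat) := [seq c == 4 | c <- x].
Definition down_set (x : seq nat) := [seq c == 5 | c <- x].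
Definition no_vertex := nseq 4 false.

Fixpoint chain_ok (s : seq (seq nat)) : bool :=
  if s is x :: s' then
    [&& layer_ok x,
        (if s' is y :: _ then down_set y == up_set x else up_set x == no_vertex)
      & chain_ok s']
  else true.

Definition valid_word (s : seq (seq nat)) :=
  chain_ok s && (if s is x :: _ then down_set x == no_vertex else true).

Definition completions k x := count (fun w => chain_ok (x :: w)) (words k).

Definition extensions k Q := \sum_(x <- letters | down_set x == Q) completions k x.

Definition step (g : seq bool -> nat) Q :=
  \sum_(x <- letters | down_set x == Q) layer_ok x * g (up_set x).

Lemma count_cons (p : pred (seq (seq nat))) k :
  count p (words k.+1) = \sum_(x <- letters) count (fun w => p (x :: w)) (words k).
Proof.
have -> : words k.+1 = flatten [seq [seq x :: w | w <- words k] | x <- letters] by [].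
by rewrite count_flatten sumnE !big_map; under eq_bigr do rewrite count_map.
Qed.

Lemma count_valid_words k : count valid_word (words k.+1) = extensions k no_vertex.
Proof.
rewrite count_cons /extensions [RHS]big_mkcond; apply: eq_bigr => x _.
rewrite /completions; case: ifP => Dx.
  by apply: eq_count => w; rewrite /valid_word /= Dx andbT.
by rewrite -(count_pred0 (words k)); apply: eq_count => w; rewrite /valid_word /= Dx andbF.
Qed.

Lemma count_andl (T : Type) (b : bool) (p : pred T) s :
  count (fun x => b && p x) s = b * count p s.
Proof. by case: b; rewrite ?mul1n ?mul0n ?count_pred0. Qed.

Lemma completionsS k x : completions k.+1 x = layer_ok x * extensions k (up_set x).
Proof.
rewrite /completions count_cons /extensions big_distrr [RHS]big_mkcond.
apply: eq_bigr => y _.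
rewrite (@eq_count _ _ (fun w =>
  layer_ok x && ((down_set y == up_set x) && chain_ok (y :: w)))) // 2!count_andl.
by case: (down_set y == up_set x); rewrite /= ?mul1n ?mul0n ?muln0.
Qed.

Lemma extensions0 Q : extensions 0 Q = step (fun U => U == no_vertex) Q.
Proof. by apply: eq_bigr => x _; rewrite /completions /= addn0 andbT mulnb. Qed.

Lemma extensionsS k Q : extensions k.+1 Q = step (extensions k) Q.
Proof. by apply: eq_bigr => x _; exact: completionsS. Qed.

Lemma eq_step g h : g =1 h -> step g =1 step h.
Proof. by move=> gh Q; apply: eq_bigr => x _; rewrite gh. Qed.

Lemma stepD g h Q : step (fun U => g U + h U) Q = step g Q + step h Q.
Proof. by rewrite /step -big_split; apply: eq_bigr => x _; rewrite mulnDr. Qed.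

Lemma stepZ c g Q : step (fun U => c * g U) Q = c * step g Q.
Proof. by rewrite /step big_distrr; apply: eq_bigr => x _; rewrite mulnCA. Qed.

(* The 16 possible down sets. Big operators are locked and do not reduce, so
   [step] is also tabulated with [sumn] on these states to evaluate [extensions]. *)
Definition states := words_over [:: true; false] 4.
Definition table (g : seq bool -> nat) := [seq g Q | Q <- states].
Definition lookup (t : seq nat) Q := nth 0 t (index Q states).

Definition step_table (t : seq nat) :=
  [seq sumn [seq layer_ok x * lookup t (up_set x) | x <- letters & down_set x == Q]
  | Q <- states].

Definition extensions_table k :=
  iter k.+1 step_table (table (fun U => U == no_vertex)).

Lemma mem_states Q : (Q \in states) = (size Q == 4).
Proof.
by rewrite mem_words_over andb_idr // => _; apply/allP => -[].
Qed.

Lemma mem_letters x : (x \in letters) = (size x == 4) && all (mem (iota 0 6)) x.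
Proof. exact: mem_words_over. Qed.

Lemma up_set_states x : x \in letters -> up_set x \in states.
Proof. by rewrite mem_letters mem_states size_map => /andP []. Qed.

Lemma lookup_table g Q : Q \in states -> lookup (table g) Q = g Q.
Proof. by move=> QS; rewrite /lookup (nth_map [::]) ?index_mem ?nth_index. Qed.

Lemma step_tableE g : step_table (table g) = table (step g).
Proof.
apply: eq_map => Q; rewrite sumnE big_map big_filter big_seq_cond [RHS]big_seq_cond.
by apply: eq_bigr => x /andP [/up_set_states/lookup_table -> _].
Qed.

Lemma extensions_tableE k : extensions_table k = table (extensions k).
Proof.
elim: k => [|k IHk]; rewrite /extensions_table iterS.
  by rewrite step_tableE; apply: eq_map => Q; rewrite extensions0.
by rewrite -/(extensions_table k) IHk step_tableE; apply: eq_map => Q; rewrite extensionsS.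
Qed.

Lemma extensionsE k Q : Q \in states -> extensions k Q = lookup (extensions_table k) Q.
Proof. by move=> QS; rewrite extensions_tableE lookup_table. Qed.

Lemma extensions_out k Q : Q \notin states -> extensions k Q = 0.
Proof.
move=> QS; rewrite /extensions big_seq_cond big_pred0 // => x.
apply: contraNF QS => /andP [xL /eqP <-].
by move: xL; rewrite mem_letters mem_states !size_map => /andP [].
Qed.

Lemma extensions_rec k Q :
  extensions k.+3 Q + extensions k Q = 4 * extensions k.+2 Q + 4 * extensions k.+1 Q.
Proof.
elim: k Q => [|k IHk] Q.
  have [QS|/extensions_out E0] := boolP (Q \in states); last by rewrite !E0.
  rewrite !extensionsE //; apply/eqP; move: Q QS; apply/allP.
  by vm_compute.
by rewrite !extensionsS -stepD (eq_step IHk) stepD !stepZ.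
Qed.

Lemma chain_okE s : chain_ok s =
  all (fun i => layer_ok (nth [::] s i) &&
     (if i.+1 < size s then down_set (nth [::] s i.+1) == up_set (nth [::] s i)
      else up_set (nth [::] s i) == no_vertex)) (iota 0 (size s)).
Proof.
elim: s => [|x s IHs] //; rewrite [size _]/= [iota _ _]/= -[1]addn0 iotaDl.
by rewrite /= all_map IHs andbA; congr (_ && _); case: s {IHs}.
Qed.

Lemma nth_up_set x a : a < size x -> nth false (up_set x) a = (nth 0 x a == 4).
Proof. by move=> ax; rewrite (nth_map 0). Qed.

Lemma nth_down_set x a : a < size x -> nth false (down_set x) a = (nth 0 x a == 5).
Proof. by move=> ax; rewrite (nth_map 0). Qed.

(** * Encoding involutions of K_4 x P_n as layer words *)

Section Encoding.
Variable n : nat.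
Implicit Types (u v : vtx n) (p : {ffun vtx n -> vtx n}).

Definition code_of v u : nat :=
  if u.2 == v.2 then nat_of_ord u.1 else if nat_of_ord u.2 == v.2.+1 then 4 else 5.

Definition vertex_of v (c : nat) : vtx n :=
  if c < 4 then (inord c, v.2)
  else if c == 4 then (v.1, insubd v.2 v.2.+1) else (v.1, insubd v.2 v.2.-1).

Lemma val_insubd_succ (b : 'I_n) : b.+1 < n -> nat_of_ord (insubd b b.+1) = b.+1.
Proof. by move=> bn; rewrite val_insubd bn. Qed.

Lemma val_insubd_pred (b : 'I_n) : nat_of_ord (insubd b b.-1) = b.-1.
Proof. by rewrite val_insubd (leq_ltn_trans (leq_pred _) (ltn_ord _)). Qed.

Lemma adjKP_cases v u : adjKP v u ->
  (u.2 = v.2 /\ u.1 != v.1) \/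
  [/\ u.1 = v.1, (u.2 == v.2) = false
    & nat_of_ord u.2 = v.2.+1 \/ (nat_of_ord u.2).+1 = v.2].
Proof.
rewrite /adjKP /adjK4 /adjP => /orP [/andP [vu /eqP ->]|/andP [/eqP -> vert]].
  by left; rewrite eq_sym.
right; split=> //; last by case/orP: vert => /eqP; lia.
by apply/negbTE/eqP => uv; case/orP: vert; rewrite uv => /eqP; lia.
Qed.

Lemma code_of_lt6 v u : code_of v u < 6.
Proof. by rewrite /code_of; case: ifP => _; [exact: ltn_trans (ltn_ord _) _ | case: ifP]. Qed.

Lemma code_of_lt4 v u : code_of v u < 4 -> u.2 = v.2 /\ code_of v u = u.1.
Proof. by rewrite /code_of; case: ifP => [/eqP -> //|_]; case: ifP. Qed.

Lemma code_of_up v u : adjKP v u ->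
  (code_of v u == 4) = (u.1 == v.1) && (nat_of_ord u.2 == v.2.+1).
Proof.
case: u v => a b [a' b'] /adjKP_cases /= [[-> ab]|[-> b_ne _]]; rewrite /code_of /= eqxx.
  by rewrite (negbTE ab); apply/negbTE; move: (ltn_ord a); lia.
by rewrite b_ne; case: (nat_of_ord b == b'.+1).
Qed.

Lemma code_of_down v u : adjKP v u ->
  (code_of v u == 5) = (u.1 == v.1) && ((nat_of_ord u.2).+1 == v.2).
Proof.
case: u v => a b [a' b'] /adjKP_cases /= [[-> ab]|[-> b_ne bb]]; rewrite /code_of /= eqxx.
  by rewrite (negbTE ab); apply/negbTE; move: (ltn_ord a); lia.
rewrite b_ne; case: bb => bb; first by rewrite bb eqxx /=; lia.
by rewrite -bb eqxx; have -> : (nat_of_ord b == b.+2) = false by lia.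
Qed.

Lemma code_ofK v u : adjKP v u -> vertex_of v (code_of v u) = u.
Proof.
case: u v => a b [a' b'] /adjKP_cases /= [[-> _]|[-> b_ne bb]].
  by rewrite /code_of /vertex_of /= eqxx ltn_ord inord_val.
rewrite /code_of /vertex_of /= b_ne; case: bb => bb.
  by rewrite bb eqxx /=; congr pair; apply: ord_inj; rewrite val_insubd_succ // -bb.
have -> : (nat_of_ord b == b'.+1) = false by lia.
by congr pair; apply: ord_inj; rewrite val_insubd_pred -bb.
Qed.

Lemma vertex_ofK v c : c < 6 -> (c == 4 -> v.2.+1 < n) -> (c == 5 -> 0 < v.2) ->
  code_of v (vertex_of v c) = c.
Proof.
case: v => a b /= c6 c4n c5n; rewrite /vertex_of /code_of /=.
case: ltnP => c4; first by rewrite eqxx inordK.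
have [c_eq4 | c_ne4] := eqVneq c 4.
  by subst c; rewrite /= -val_eqE /= val_insubd_succ ?c4n // (gtn_eqF (ltnSn b)) eqxx.
have c_eq5 : c = 5 by lia.
subst c; have b0 := c5n isT; rewrite /= -val_eqE /= val_insubd_pred ltn_eqF; last by lia.
by have -> : (b.-1 == b.+1) = false by lia.
Qed.

Lemma adjKP_vertex_of v c : c < 6 -> (c < 4 -> c != v.1) -> (c == 4 -> v.2.+1 < n) ->
  (c == 5 -> 0 < v.2) -> adjKP v (vertex_of v c).
Proof.
case: v => a b /= c6 c4a c4n c5n; rewrite /vertex_of /adjKP /adjK4 /adjP /=.
case: ltnP => c4.
  rewrite eqxx andbT; apply/orP; left; apply: contra (c4a c4) => /eqP ->.
  by rewrite inordK.
have [c_eq4 | c_ne4] := eqVneq c 4.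
  by subst c; rewrite /= eqxx val_insubd_succ ?c4n // eqxx.
have c_eq5 : c = 5 by lia.
by subst c; rewrite /= eqxx val_insubd_pred prednK ?c5n // eqxx orbT.
Qed.

Definition layer_letter p (b : 'I_n) := [seq code_of (a, b) (p (a, b)) | a <- enum 'I_4].
Definition encode p := [seq layer_letter p b | b <- enum 'I_n].

Lemma size_encode p : size (encode p) = n.
Proof. by rewrite size_map size_enum_ord. Qed.

Lemma size_layer_letter p (b : 'I_n) : size (layer_letter p b) = 4.
Proof. by rewrite size_map size_enum_ord. Qed.

Lemma nth_encode p (b : 'I_n) : nth [::] (encode p) b = layer_letter p b.
Proof. by rewrite (nth_map b) ?size_enum_ord // nth_ord_enum. Qed.

Lemma nth_layer_letter p (b : 'I_n) (a : 'I_4) :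
  nth 0 (layer_letter p b) a = code_of (a, b) (p (a, b)).
Proof. by rewrite (nth_map a) ?size_enum_ord // nth_ord_enum. Qed.

Lemma encode_inj p q : matching_involution (@adjKP n) p ->
  matching_involution (@adjKP n) q -> encode p = encode q -> p = q.
Proof.
move=> /matching_involutionP p_inv /matching_involutionP q_inv Epq.
apply/ffunP => -[a b]; have := congr1 (fun s => nth 0 (nth [::] s b) a) Epq.
rewrite /= !nth_encode !nth_layer_letter => /(congr1 (vertex_of (a, b))).
by rewrite !code_ofK ?(p_inv _).1 ?(q_inv _).1.
Qed.

Lemma vtx_eqE (a : 'I_4) (b : 'I_n) u :
  (u.1 == a) && (nat_of_ord u.2 == b) = (u == (a, b)).
Proof. by case: u => x y; rewrite xpair_eqE val_eqE. Qed.

Section EncodeValid.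
Variable p : {ffun vtx n -> vtx n}.
Hypothesis p_inv : matching_involution (@adjKP n) p.

Let p_adj v : adjKP v (p v).
Proof. by have /matching_involutionP/(_ v) [] := p_inv. Qed.

Let pK v : p (p v) = v.
Proof. by have /matching_involutionP/(_ v) [] := p_inv. Qed.

Lemma layer_ok_letter (b : 'I_n) : layer_ok (layer_letter p b).
Proof.
apply/allP => a; rewrite mem_iota add0n => /andP [_ a_lt].
rewrite (nth_layer_letter p b (Ordinal a_lt)).
set v := (Ordinal a_lt, b); apply/implyP => /code_of_lt4 [pv2 ->].
have Epv : p v = ((p v).1, b) by case: (p v) pv2 => x y /= ->.
apply/andP; split.
  apply: contraTneq (p_adj v) => pv1.
  have -> : p v = v by rewrite Epv; congr pair; apply: val_inj.
  by rewrite adjKP_irr.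
by rewrite nth_layer_letter -Epv pK /code_of pv2 eqxx.
Qed.

Lemma down_set_next (b b' : 'I_n) : nat_of_ord b' = b.+1 ->
  down_set (layer_letter p b') = up_set (layer_letter p b).
Proof.
move=> bb'; rewrite /down_set /up_set -!map_comp; apply: eq_map => a /=.
rewrite code_of_down // code_of_up //= bb' eqSS -bb' !vtx_eqE.
by apply/eqP/eqP => <-; rewrite pK.
Qed.

Lemma up_set_top (b : 'I_n) : n <= b.+1 -> up_set (layer_letter p b) = no_vertex.
Proof.
move=> bn; have /all_pred1P -> : all (pred1 false) (up_set (layer_letter p b)).
  apply/allP => x; rewrite /up_set -map_comp => /mapP [a _ ->] /=.
  rewrite code_of_up //= eqbF_neg; apply/nandP; right.
  by apply/eqP => E; move: (ltn_ord (p (a, b)).2); rewrite E; lia.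
by rewrite size_map size_layer_letter.
Qed.

Lemma down_set_bottom (b : 'I_n) : nat_of_ord b = 0 ->
  down_set (layer_letter p b) = no_vertex.
Proof.
move=> b0; have /all_pred1P -> : all (pred1 false) (down_set (layer_letter p b)).
  apply/allP => x; rewrite /down_set -map_comp => /mapP [a _ ->] /=.
  by rewrite code_of_down //= b0 andbF.
by rewrite size_map size_layer_letter.
Qed.

Lemma encode_valid : valid_word (encode p).
Proof.
rewrite /valid_word chain_okE size_encode; apply/andP; split.
  apply/allP => i; rewrite mem_iota add0n => /andP [_ i_lt].
  rewrite (nth_encode p (Ordinal i_lt)) layer_ok_letter /=.
  case: ifP => [i1_lt | /negbT]; last by rewrite -leqNgt => /(@up_set_top (Ordinal i_lt)) ->.
  by rewrite (nth_encode p (Ordinal i1_lt)) (@down_set_next (Ordinal i_lt)).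
case E: (encode p) => [//|x s]; have n_pos : 0 < n by rewrite -(size_encode p) E.
by rewrite -[x]/(nth [::] (x :: s) 0) -E (nth_encode p (Ordinal n_pos)) down_set_bottom.
Qed.

End EncodeValid.

Section Decoding.
Variable s : seq (seq nat).
Hypotheses (s_word : s \in words n) (s_valid : valid_word s).

Lemma size_word : size s = n.
Proof. by move: s_word; rewrite mem_words_over => /andP [/eqP]. Qed.

Lemma nth_word_letter i : i < n -> nth [::] s i \in letters.
Proof.
move=> i_lt; move: s_word; rewrite mem_words_over => /andP [_ /allP]; apply.
by rewrite mem_nth // size_word.
Qed.

Lemma size_nth_word i : i < n -> size (nth [::] s i) = 4.
Proof. by move/nth_word_letter; rewrite mem_letters => /andP [/eqP]. Qed.

Definition entry i a := nth 0 (nth [::] s i) a.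

Lemma entry_lt6 i a : i < n -> a < 4 -> entry i a < 6.
Proof.
move=> i_lt a_lt; move: (nth_word_letter i_lt).
rewrite mem_letters => /andP [/eqP si /allP s6].
have : entry i a \in iota 0 6 by apply: s6; apply: mem_nth; rewrite si.
by rewrite mem_iota.
Qed.

Lemma chain_ok_at i : i < n -> layer_ok (nth [::] s i) &&
   (if i.+1 < n then down_set (nth [::] s i.+1) == up_set (nth [::] s i)
    else up_set (nth [::] s i) == no_vertex).
Proof.
move=> i_lt; move: s_valid; rewrite /valid_word chain_okE size_word => /andP [/allP].
by move=> + _; apply; rewrite mem_iota.
Qed.

Lemma entry_layer i a : i < n -> a < 4 -> entry i a < 4 ->
  entry i a != a /\ entry i (entry i a) = a.
Proof.
move=> i_lt a_lt c_lt; case/andP: (chain_ok_at i_lt) => /allP /(_ a) + _.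
by rewrite mem_iota a_lt => /(_ isT) /implyP /(_ c_lt) /andP [-> /eqP].
Qed.

Lemma entry_up i a : i < n -> a < 4 -> entry i a = 4 -> i.+1 < n /\ entry i.+1 a = 5.
Proof.
move=> i_lt a_lt c4; case/andP: (chain_ok_at i_lt) => _; case: ifP => i1_lt /eqP E.
  split=> //; apply/eqP; rewrite /entry -nth_down_set ?size_nth_word // E.
  by rewrite nth_up_set ?size_nth_word // -/(entry i a) c4.
have := congr1 (fun l => nth false l a) E.
by rewrite nth_up_set ?size_nth_word // nth_nseq a_lt -/(entry i a) c4.
Qed.

Lemma entry_down i a : i < n -> a < 4 -> entry i a = 5 -> 0 < i /\ entry i.-1 a = 4.
Proof.
case: i => [|i] i_lt a_lt c5.
  move: s_valid; rewrite /valid_word; case E: s => [|x s'] /=.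
    by move: i_lt; rewrite -size_word E.
  case/andP=> _ /eqP /(congr1 (fun l => nth false l a)).
  have x0 : x = nth [::] s 0 by rewrite E.
  by rewrite nth_down_set x0 ?size_nth_word // nth_nseq a_lt -/(entry 0 a) c5.
split=> //=; have i_lt' : i < n by apply: ltnW.
case/andP: (chain_ok_at i_lt') => _; rewrite i_lt => /eqP /(congr1 (fun l => nth false l a)).
rewrite nth_down_set ?size_nth_word // nth_up_set ?size_nth_word //.
by rewrite -/(entry i.+1 a) c5 => /esym/eqP.
Qed.

Definition decode : {ffun vtx n -> vtx n} := [ffun v => vertex_of v (entry v.2 v.1)].

Lemma decode_involution : matching_involution (@adjKP n) decode.
Proof.
apply/matching_involutionP => -[a b].
have b_lt := ltn_ord b; have a_lt := ltn_ord a; have c6 := entry_lt6 b_lt a_lt.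
rewrite ffunE; split.
  apply: adjKP_vertex_of => //= [c4|/eqP c4|/eqP c5].
  - exact: (entry_layer b_lt a_lt c4).1.
  - exact: (entry_up b_lt a_lt c4).1.
  - exact: (entry_down b_lt a_lt c5).1.
rewrite {1}/vertex_of /=; case: ltnP => c4.
  have [_ cK] := entry_layer b_lt a_lt c4.
  rewrite ffunE /= inordK // cK /vertex_of a_lt.
  by congr pair; apply: val_inj; rewrite /= inordK.
have [c_eq4|c_ne4] := eqVneq (entry b a) 4.
  have [b1_lt c'] := entry_up b_lt a_lt c_eq4.
  rewrite ffunE /= val_insubd_succ // c' /vertex_of /=; congr pair; apply: ord_inj.
  by rewrite val_insubd_pred val_insubd_succ.
have c_eq5 : entry b a = 5 by lia.
have [b_pos c'] := entry_down b_lt a_lt c_eq5.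
rewrite ffunE /= val_insubd_pred c' /vertex_of /=; congr pair; apply: ord_inj.
by rewrite val_insubd_succ val_insubd_pred ?prednK.
Qed.

Lemma encode_decode : encode decode = s.
Proof.
apply: (@eq_from_nth _ [::]) => [|i]; rewrite size_encode ?size_word // => i_lt.
rewrite (nth_encode decode (Ordinal i_lt)).
apply: (@eq_from_nth _ 0) => [|a]; rewrite size_layer_letter ?size_nth_word // => a_lt.
rewrite (nth_layer_letter decode (Ordinal i_lt) (Ordinal a_lt)) ffunE.
apply: vertex_ofK => /= [|/eqP c4|/eqP c5]; first exact: entry_lt6.
  exact: (entry_up i_lt a_lt c4).1.
exact: (entry_down i_lt a_lt c5).1.
Qed.

End Decoding.

Lemma card_matching_involutions :
  #|[set p | matching_involution (@adjKP n) p]| = count valid_word (words n).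
Proof.
rewrite -size_filter cardE -(size_map encode); apply: perm_size; apply: uniq_perm.
- rewrite map_inj_in_uniq ?enum_uniq // => p q; rewrite !mem_enum !inE.
  exact: encode_inj.
- by rewrite filter_uniq // !uniq_words_over // iota_uniq.
move=> s; rewrite mem_filter; apply/mapP/andP => [[p] | [s_valid s_word]].
  rewrite mem_enum inE => p_inv ->; split; first exact: encode_valid.
  rewrite mem_words_over size_encode eqxx /=; apply/allP => _ /mapP [b _ ->].
  change (layer_letter p b \in letters).
  rewrite mem_letters size_layer_letter /=; apply/allP => _ /mapP [a _ ->].
  by change (code_of (a, b) (p (a, b)) \in iota 0 6); rewrite mem_iota code_of_lt6.
exists (decode s); first by rewrite mem_enum inE decode_involution.
by rewrite encode_decode.
Qed.

End Encoding.

(** * Recurrence and closed form *)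

Lemma domino_count_extensions k : domino_count k.+1 = extensions k no_vertex.
Proof. by rewrite domino_count_involutions card_matching_involutions count_valid_words. Qed.

Lemma domino_count_small :
  [/\ domino_count 1 = 3, domino_count 2 = 16 & domino_count 3 = 75].
Proof. by rewrite !domino_count_extensions !extensionsE //; vm_compute. Qed.

Local Open Scope ring_scope.

Lemma domino_count_rec (R : pzRingType) k :
  (domino_count k.+4)%:R = 4 * (domino_count k.+3)%:R + 4 * (domino_count k.+2)%:R
                           - (domino_count k.+1)%:R :> R.
Proof.
apply: (addIr (domino_count k.+1)%:R); rewrite subrK -natrD !domino_count_extensions.
by rewrite extensions_rec natrD !natrM.
Qed.

Lemma linear_rec3_uniq (R : pzRingType) (u v : nat -> R) :
  (forall m, u m.+3 = 4 * u m.+2 + 4 * u m.+1 - u m) ->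
  (forall m, v m.+3 = 4 * v m.+2 + 4 * v m.+1 - v m) ->
  u 0%N = v 0%N -> u 1%N = v 1%N -> u 2%N = v 2%N -> u =1 v.
Proof.
move=> u_rec v_rec uv0 uv1 uv2 m.
suff [] : [/\ u m = v m, u m.+1 = v m.+1 & u m.+2 = v m.+2] by [].
elim: m => [|m [uvm uvm1 uvm2]]; first by [].
by split=> //; rewrite u_rec v_rec uvm uvm1 uvm2.
Qed.

Lemma expr_rec3 (R : comPzRingType) (x : R) m :
  x = -1 \/ x ^+ 2 - 5 * x + 1 = 0 ->
  x ^+ m.+3 = 4 * x ^+ m.+2 + 4 * x ^+ m.+1 - x ^+ m.
Proof.
move=> x_roots; apply/eqP; rewrite -subr_eq0.
have x_root : (x + 1) * (x ^+ 2 - 5 * x + 1) = 0.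
  by case: x_roots => ->; rewrite ?addNr ?mul0r ?mulr0.
have -> : x ^+ m.+3 - (4 * x ^+ m.+2 + 4 * x ^+ m.+1 - x ^+ m)
          = x ^+ m * ((x + 1) * (x ^+ 2 - 5 * x + 1)) by rewrite !exprS; ring.
by rewrite x_root mulr0.
Qed.

Lemma root_half_sqrt21 (R : numFieldType) (y : R) :
  y ^+ 2 = 21 -> ((5 + y) / 2) ^+ 2 - 5 * ((5 + y) / 2) + 1 = 0.
Proof.
move=> y2; have -> : ((5 + y) / 2) ^+ 2 - 5 * ((5 + y) / 2) + 1 = (y ^+ 2 - 21) / 4 by field.
by rewrite y2 subrr mul0r.
Qed.

Definition closed_form (R : rcfType) (n : nat) : R :=
  7%:R^-1 * (((5 + Num.sqrt 21) / 2) ^+ n.+1 + ((5 - Num.sqrt 21) / 2) ^+ n.+1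
             + 2 * (-1) ^+ n).

Lemma closed_form_rec (R : rcfType) m :
  closed_form R m.+3 = 4 * closed_form R m.+2 + 4 * closed_form R m.+1 - closed_form R m.
Proof.
have r2 : Num.sqrt 21 ^+ 2 = 21 :> R by rewrite sqr_sqrtr ?ler0n.
have a_root := root_half_sqrt21 r2.
have b_root : ((5 - Num.sqrt 21) / 2) ^+ 2 - 5 * ((5 - Num.sqrt 21) / 2) + 1 = 0 :> R.
  by apply: root_half_sqrt21; rewrite sqrrN.
rewrite /closed_form (expr_rec3 m.+1 (or_intror a_root)).
rewrite (expr_rec3 m.+1 (or_intror b_root)) (@expr_rec3 _ (-1) m (or_introl erefl)).
ring.
Qed.

Lemma closed_form_small (R : rcfType) :
  [/\ closed_form R 1 = 3, closed_form R 2 = 16 & closed_form R 3 = 75].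
Proof.
rewrite /closed_form; set r := Num.sqrt 21; set a := (5 + r) / 2; set b := (5 - r) / 2.
have r2 : r ^+ 2 = 21 by rewrite sqr_sqrtr ?ler0n.
have ab_sum : a + b = 5 by rewrite /a /b; field.
have ab_prod : a * b = 1.
  have -> : a * b = (25 - r ^+ 2) / 4 by rewrite /a /b; field.
  by rewrite r2; field.
have -> : a ^+ 2 + b ^+ 2 = (a + b) ^+ 2 - 2 * (a * b) by ring.
have -> : a ^+ 3 + b ^+ 3 = (a + b) ^+ 3 - 3 * (a * b) * (a + b) by ring.
have -> : a ^+ 4 + b ^+ 4 = ((a + b) ^+ 2 - 2 * (a * b)) ^+ 2 - 2 * (a * b) ^+ 2 by ring.
by rewrite ab_sum ab_prod; split; field.
Qed.

Theorem theorem10 :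
  (forall n : nat, (4 <= n)%N ->
     (domino_count n)%:Z =
       4 * (domino_count (n - 1)%N)%:Z + 4 * (domino_count (n - 2)%N)%:Z
       - (domino_count (n - 3)%N)%:Z :> int)
  /\
  (forall (R : rcfType) (n : nat), (1 <= n)%N ->
     (domino_count n)%:R =
       7%:R^-1 * (((5 + Num.sqrt 21) / 2) ^+ n.+1 + ((5 - Num.sqrt 21) / 2) ^+ n.+1
               + 2 * (-1) ^+ n) :> R).
Proof.
split=> [[|[|[|[|k]]]] // _ | R [|k] // _].
  by rewrite !subSS !subn0 -!natz domino_count_rec.
have [d1 d2 d3] := domino_count_small; have [c1 c2 c3] := closed_form_small R.
apply: (@linear_rec3_uniq R (fun m => (domino_count m.+1)%:R) (fun m => closed_form R m.+1)).
- exact: domino_count_rec.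
- by move=> m; exact: closed_form_rec.
- by rewrite /= d1 c1.
- by rewrite /= d2 c2.
- by rewrite /= d3 c3.
Qed.
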